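(* Let $k\ge0$ be an integer and $a,b,c,d\in\mathbb{C}$ generic (no lower parameter a nonpositive integer). Define the polynomial of degree $2k$ in $n$ $$Q_k^{(2)}(n;a;b,c,d)={}_4F_3\!\left[\begin{matrix}-n,\ n+a,\ -k,\ k-1-a+b+c+d\\ b,\ c,\ d\end{matrix}\,\Big|\,1\right]=\sum_{j=0}^k\frac{(-n)_j(n+a)_j(-k)_j(k-1-a+b+c+d)_j}{j!\,(b)_j(c)_j(d)_j}.$$ Then, near $x=0$, $${}_4F_3\!\left[\begin{matrix}\tfrac a2,\ \tfrac12+\tfrac a2,\ 1-k+a-b-c,\ k+d\\ 1+a-b,\ 1+a-c,\ d\end{matrix}\,\Big|\,-\frac{4x}{(1-x)^2}\right]=(1-x)^a\sum_{n=0}^\infty\frac{(a)_n(b)_n(c)_n}{n!\,(1+a-b)_n(1+a-c)_n}\,Q_k^{(2)}(n;a;b,c,d)\,x^n.$$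
   Context: $(c)_n$ denotes the Pochhammer symbol, $(c)_0=1$; ${}_pF_q$ is the generalized hypergeometric series $\sum_n\frac{\prod(a_i)_n}{n!\prod(b_i)_n}x^n$. *)

(* Formal power series are represented by coefficient
   functions nat -> R. *)
From HB Require Import structures.
From mathcomp Require Import all_boot all_order all_algebra.
Set Implicit Arguments. Unset Strict Implicit. Unset Printing Implicit Defensive.
Import Order.TTheory GRing.Theory Num.Theory.
Local Open Scope ring_scope.

Section Defs.
Variable R : fieldType.

Definition poch (c : R) (n : nat) : R := \prod_(i < n) (c + i%:R).

Definition hypcoef (as_ bs : seq R) (n : nat) : R :=
  (\prod_(a <- as_) poch a n) / (n`!%:R * \prod_(b <- bs) poch b n).

Definition fps_one : nat -> R := fun n => (n == 0%N)%:R.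
Definition fps_X : nat -> R := fun n => (n == 1%N)%:R.
Definition fps_mul (f g : nat -> R) : nat -> R :=
  fun n => \sum_(i < n.+1) f i * g (n - i)%N.
Definition fps_pow (g : nat -> R) (m : nat) : nat -> R := iter m (fps_mul g) fps_one.
(* composition f(g(x)), meaningful when g 0 = 0 *)
Definition fps_comp (f g : nat -> R) : nat -> R :=
  fun n => \sum_(m < n.+1) f m * fps_pow g m n.
(* binomial series (1 - x)^a = sum_n (-a)_n / n! x^n *)
Definition binom_series (a : R) : nat -> R := fun n => poch (- a) n / n`!%:R.

Definition Q2 (k n : nat) (a b c d : R) : R :=
  \sum_(j < k.+1)
    (poch (- n%:R) j * poch (n%:R + a) j * poch (- k%:R) j
       * poch (k%:R - 1 - a + b + c + d) j)
    / (j`!%:R * poch b j * poch c j * poch d j).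
End Defs.

(* Write T_m for the coefficient
   (1-k+a-b-c)_m (k+d)_m / (m! (1+a-b)_m (1+a-c)_m (d)_m).  On the left, the
   m-th power of -4x/(1-x)^2 is (-4)^m x^m (1-x)^(-2m), and the duplication
   formula (a/2)_m (1/2+a/2)_m 4^m = (a)_(2m) turns the m-th term into
   (-1)^m (a)_(2m) T_m x^m (1-x)^(-2m).  On the right, expanding
   (1-k+a-b-c)_m (k+d)_m by the Pfaff-Saalschutz sum and summing the resulting
   balanced 3F2 by Pfaff-Saalschutz again gives the Whipple-type identity
     (b)_n (c)_n / ((1+a-b)_n (1+a-c)_n) Q_k(n) = sum_(m<=n) (-n)_m (n+a)_m T_m;
   after exchanging the two sums, the inner sum over n is a Chu-Vandermonde
   convolution producing the same factor (1-x)^(-2m). *)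

From HB Require Import structures.
From mathcomp Require Import all_boot all_order all_algebra.
From mathcomp Require Import ring zify.
Set Implicit Arguments. Unset Strict Implicit. Unset Printing Implicit Defensive.
Import Order.TTheory GRing.Theory Num.Theory.
Local Open Scope ring_scope.

Section BigSums.
Variable V : nmodType.

Lemma sum_ord_trunc (F : nat -> V) n p : (n <= p)%N ->
  (forall i, (n <= i < p)%N -> F i = 0) ->
  \sum_(i < p) F i = \sum_(i < n) F i.
Proof.
move=> le_np F0; rewrite (big_ord_widen _ _ le_np) [RHS]big_mkcond.
by apply: eq_bigr => i _; case: ltnP => // le_ni; rewrite F0 // le_ni ltn_ord.
Qed.

Lemma sum_triangle_exchange (F : nat -> nat -> V) N :
  \sum_(n < N.+1) \sum_(m < n.+1) F n m
  = \sum_(m < N.+1) \sum_(l < (N - m).+1) F (m + l)%N m.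
Proof.
transitivity (\sum_(n < N.+1) \sum_(m < N.+1 | (m < n.+1)%N) F n m).
  by apply: eq_bigr => n _; rewrite (big_ord_widen _ _ (ltn_ord n)).
rewrite (exchange_big_dep xpredT) //=; apply: eq_bigr => m _.
have:= big_geq_mkord m N.+1 xpredT (F^~ m); rewrite /= => <-.
rewrite -{1}(add0n m) big_addn -subSn ?leq_ord // big_mkord.
by apply: eq_bigr => l _; rewrite addnC.
Qed.

Lemma sum_binS (F : nat -> V) n :
  \sum_(j < n.+2) F j *+ 'C(n.+1, j) = \sum_(j < n.+1) (F j + F j.+1) *+ 'C(n, j).
Proof.
under [RHS]eq_bigr do rewrite mulrnDl.
rewrite big_ord_recl big_split /=.
under eq_bigr => j _ do rewrite /bump /= binS mulrnDr.
rewrite big_split /= addrA; congr (_ + _).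
rewrite [RHS]big_ord_recl big_ord_recr /= (bin_small (ltnSn n)) mulr0n addr0 !bin0.
by congr (_ + _); apply: eq_bigr.
Qed.
End BigSums.

Section Pochhammer.
Variable R : fieldType.
Implicit Types x y z w : R.

Lemma poch0 x : poch x 0 = 1.
Proof. by rewrite /poch big_ord0. Qed.

Lemma pochS x n : poch x n.+1 = poch x n * (x + n%:R).
Proof. by rewrite /poch big_ord_recr. Qed.

Lemma pochD x m n : poch x (m + n) = poch x m * poch (x + m%:R) n.
Proof.
elim: n => [|n IHn]; first by rewrite addn0 poch0 mulr1.
by rewrite addnS !pochS IHn natrD addrA mulrA.
Qed.

Lemma pochSl x n : poch x n.+1 = x * poch (x + 1) n.
Proof. by rewrite -add1n pochD /poch big_ord1 addr0. Qed.

Lemma poch_neq0_split x m n :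
  poch x (m + n) != 0 -> poch x m != 0 /\ poch (x + m%:R) n != 0.
Proof. by rewrite pochD mulf_eq0 negb_or => /andP. Qed.

Lemma poch_reflect z w n : w = 1 - z - n%:R -> poch w n = (-1) ^+ n * poch z n.
Proof.
elim: n w => [|n IHn] _ ->; first by rewrite !poch0 mulr1.
rewrite pochSl (IHn _ (_ : _ = 1 - z - n%:R)) ?pochS ?exprS -?natr1; ring.
Qed.

Lemma poch_Nnat_eq0 n j : (n < j)%N -> poch (- n%:R : R) j = 0.
Proof. by move=> /subnKC <-; rewrite pochD pochS addNr mulr0 mul0r. Qed.

Lemma poch_nat_fact l m : poch l.+1%:R m * l`!%:R = (l + m)`!%:R :> R.
Proof.
elim: m => [|m IHm]; first by rewrite poch0 mul1r addn0.
by rewrite pochS mulrAC IHm addnS factS natrM -natrD addSn mulrC.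
Qed.

Lemma chu_vandermonde x y n :
  \sum_(j < n.+1) poch x j * poch y (n - j) * 'C(n, j)%:R = poch (x + y) n.
Proof.
under eq_bigr do rewrite mulr_natr.
elim: n => [|n IHn]; first by rewrite big_ord1 !poch0 mulr1.
rewrite (sum_binS (fun j => poch x j * poch y (n.+1 - j))) pochS -IHn mulr_suml.
apply: eq_bigr => j _.
have le_jn : (j <= n)%N by rewrite -ltnS.
rewrite subSS subSn // !pochS.
by rewrite mulrnAl natrB //; congr (_ *+ _); ring.
Qed.

Section PfaffSaalschutz.
Variables A B C : R.

Let term m j :=
  poch A j * poch B j * poch (C + j%:R) (m - j) * poch (C - A - B) (m - j) * 'C(m, j)%:R.

(* Zeilberger certificate for the recurrence of [term] in m. *)
Let weight m j := (A + j%:R) * (B + j%:R) * term m j.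

Lemma pfaff_saalschutz_term_step m j : (j <= m)%N ->
  term m.+1 j.+1
  = (C - A + m%:R) * (C - B + m%:R) * term m j.+1 - (weight m j.+1 - weight m j).
Proof.
rewrite /weight /term leq_eqVlt => /orP[/eqP ->|lt_jm].
  by rewrite !binn (bin_small (ltnSn m)) !subnn !poch0 !pochS; ring.
have [r ->] : exists r, m = (j.+1 + r)%N by exists (m - j.+1)%N; rewrite subnKC.
have -> : ((j.+1 + r).+1 - j.+1 = r.+1)%N by rewrite -addnS addKn.
have -> : (j.+1 + r - j.+1 = r)%N by rewrite addKn.
have -> : (j.+1 + r - j = r.+1)%N by rewrite addSn subSn ?leq_addr // addKn.
have bin_rel : r.+1%:R * 'C(j.+1 + r, j)%:R = j.+1%:R * 'C(j.+1 + r, j.+1)%:R :> R.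
  by rewrite -!natrM mul_bin_left addSn subSn ?leq_addr // addKn.
rewrite binS natrD [poch (C + j%:R) _]pochSl -[C + j%:R + 1]addrA natr1.
set K := poch A j.+1 * poch B j.+1 * poch (C + j.+1%:R) r * poch (C - A - B) r
  * (C - A - B + r%:R).
apply/eqP; rewrite -subr_eq0; apply/eqP.
transitivity (K * (r.+1%:R * 'C(j.+1 + r, j)%:R - j.+1%:R * 'C(j.+1 + r, j.+1)%:R)).
  by rewrite /K !pochS natrD -!natr1; ring.
by rewrite bin_rel subrr mulr0.
Qed.

Lemma pfaff_saalschutz m :
  \sum_(j < m.+1) term m j = poch (C - A) m * poch (C - B) m.
Proof.
elim: m => [|m IHm]; first by rewrite big_ord1 /term !poch0 !mul1r.
rewrite big_ord_recl.
under eq_bigr => j _ do rewrite (pfaff_saalschutz_term_step (ltnSE (ltn_ord j))).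
rewrite sumrB -mulr_sumr -(big_mkord xpredT (fun j => weight m j.+1 - weight m j)).
rewrite telescope_sumr //.
have top : term m m.+1 = 0 by rewrite /term bin_small // mulr0.
rewrite /weight top mulr0 [in RHS]pochS [in RHS]pochS [RHS]mulrACA -IHm.
have -> : \sum_(j < m.+1) term m j = \sum_(j < m.+2) term m j.
  by rewrite [RHS]big_ord_recr top Monoid.mulm1.
rewrite [in RHS]big_ord_recl.
under [in RHS]eq_bigr => i _ do rewrite lift0.
set S := \sum_i _.
rewrite /term /= !subn0 !bin0 !poch0 !pochS; ring.
Qed.
End PfaffSaalschutz.
End Pochhammer.

Section Hypergeometric.
Variable R : fieldType.
Implicit Types (x y : R) (xs ys : seq R).

Lemma hypcoef_consl x xs ys n : hypcoef (x :: xs) ys n = poch x n * hypcoef xs ys n.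
Proof. by rewrite /hypcoef big_cons mulrA. Qed.

Lemma hypcoef_consr xs y ys n : hypcoef xs (y :: ys) n = hypcoef xs ys n / poch y n.
Proof. by rewrite /hypcoef big_cons mulrCA invfM mulrA mulrAC. Qed.

Lemma hypcoef_nil n : hypcoef [::] [::] n = n`!%:R^-1 :> R.
Proof. by rewrite /hypcoef !big_nil mul1r mulr1. Qed.
End Hypergeometric.

Section CharacteristicZero.
Variable R : numFieldType.
Implicit Types x : R.

Lemma natr_fact_neq0 n : n`!%:R != 0 :> R.
Proof. by rewrite pnatr_eq0 -lt0n fact_gt0. Qed.

Lemma poch_neq0 x n : (forall m : nat, x != - m%:R) -> poch x n != 0.
Proof. by move=> xN; apply/prodf_neq0 => i _; rewrite addr_eq0 xN. Qed.

Lemma poch_shift_neq0 x j n :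
  (forall m : nat, x != - m%:R) -> poch (x + j%:R) n != 0.
Proof.
move=> xN; apply: poch_neq0 => m; apply: contraNneq (xN (m + j)%N) => xjm.
by rewrite natrD -[x](addrK j%:R) xjm opprD.
Qed.

Lemma poch_Nnat_fact m l :
  poch (- (m + l)%:R : R) m / (m + l)`!%:R = (-1) ^+ m / l`!%:R.
Proof.
rewrite (@poch_reflect _ l.+1%:R); last by rewrite -natr1 natrD; ring.
have : poch l.+1%:R m * l`!%:R != 0 :> R by rewrite poch_nat_fact natr_fact_neq0.
rewrite mulf_eq0 negb_or => /andP[poch_l_neq0 _].
by rewrite addnC -(poch_nat_fact _ l m) invfM mulrA mulfK.
Qed.

Lemma poch_duplication x m :
  poch (x / 2%:R) m * poch (2%:R^-1 + x / 2%:R) m * 4%:R ^+ m = poch x (2 * m).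
Proof.
have two_neq0 : 2%:R != 0 :> R by rewrite pnatr_eq0.
elim: m => [|m IHm]; first by rewrite !poch0 !mulr1.
by rewrite mulnS !pochS -IHm exprS natrM -natr1; field.
Qed.

Lemma poch_nat_binomial l r : poch r.+1%:R l = 'C(l + r, l)%:R * l`!%:R :> R.
Proof.
apply: (mulIf (natr_fact_neq0 r)); rewrite poch_nat_fact -mulrA -!natrM.
by rewrite addnC -(bin_fact (leq_addr r l)) addKn.
Qed.

Lemma pfaff_saalschutz_balanced (A B C : R) M :
  poch C M != 0 -> poch (C - A - B) M != 0 ->
  \sum_(l < M.+1) hypcoef [:: - M%:R; A; B] [:: C; 1 + A + B - C - M%:R] l
  = poch (C - A) M * poch (C - B) M / (poch C M * poch (C - A - B) M).
Proof.
rewrite -pfaff_saalschutz mulr_suml => CM DM; apply: eq_bigr => -[l lt_lM] _ /=.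
have [r defM] : exists r, M = (l + r)%N by exists (M - l)%N; rewrite subnKC // -ltnS.
subst M; rewrite addnC in DM; rewrite addKn [in poch (C - A - B) _]addnC !pochD.
have [Cl Clr] := poch_neq0_split CM; have [Dr Drl] := poch_neq0_split DM.
rewrite !hypcoef_consl !hypcoef_consr hypcoef_nil.
rewrite (@poch_reflect _ r.+1%:R (- (l + r)%:R)); last by rewrite -natr1 natrD; ring.
rewrite (@poch_reflect _ (C - A - B + r%:R) (1 + A + B - C - (l + r)%:R)); last first.
  by rewrite natrD; ring.
rewrite poch_nat_binomial.
have sign_neq0 : (-1) ^+ l != 0 :> R by rewrite signr_eq0.
by field; rewrite sign_neq0 Cl Clr Dr Drl natr_fact_neq0.
Qed.
End CharacteristicZero.

Section FormalPowerSeries.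
Variable R : numFieldType.
Implicit Types (c e : R) (f h : nat -> R).

Lemma fps_mulC f h n : fps_mul f h n = fps_mul h f n.
Proof.
rewrite /fps_mul (reindex_inj rev_ord_inj); apply: eq_bigr => -[i /= lt_in] _.
by rewrite subSS (subKn (ltnSE lt_in)) mulrC.
Qed.

Lemma fps_powS f m : fps_pow f m.+1 = fps_mul f (fps_pow f m).
Proof. by []. Qed.

Lemma binom_series_mul e (e' : R) n :
  fps_mul (binom_series e) (binom_series e') n = binom_series (e + e') n.
Proof.
rewrite /fps_mul /binom_series opprD -chu_vandermonde mulr_suml.
apply: eq_bigr => -[j /= lt_jn] _; rewrite -(bin_fact (ltnSE lt_jn)) !natrM.
have binom_neq0 : 'C(n, j)%:R != 0 :> R by rewrite pnatr_eq0 -lt0n bin_gt0 -ltnS.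
by field; rewrite binom_neq0 !natr_fact_neq0.
Qed.

Lemma binom_series_pow e m n : fps_pow (binom_series e) m n = binom_series (e * m%:R) n.
Proof.
elim: m n => [|m IHm] n.
  rewrite mulr0 /fps_pow /fps_one /binom_series oppr0.
  by case: n => [|n]; rewrite ?poch0 ?divr1 // pochSl !mul0r.
transitivity (fps_mul (binom_series e) (binom_series (e * m%:R)) n).
  by rewrite fps_powS; apply: eq_bigr => i _; rewrite IHm.
by rewrite binom_series_mul -natr1 mulrDr mulr1 addrC.
Qed.

Lemma fps_Xmul h n : fps_mul (@fps_X R) h n = if n is n'.+1 then h n' else 0.
Proof.
case: n => [|n]; first by rewrite /fps_mul big_ord1 /fps_X mul0r.
rewrite /fps_mul 2!big_ord_recl big1 => [|i _]; last by rewrite /fps_X mul0r.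
by rewrite /fps_X /= mul0r mul1r add0r addr0 subn1.
Qed.

Lemma fps_mul_scaled_shift c h f n :
  fps_mul (fun k => c * fps_mul (@fps_X R) h k) f n
  = if n is n'.+1 then c * fps_mul h f n' else 0.
Proof.
set G := fun k => _; rewrite {1}/fps_mul /G.
case: n => [|n]; first by rewrite big_ord1 fps_Xmul mulr0 mul0r.
rewrite big_ord_recl fps_Xmul mulr0 mul0r add0r mulr_sumr.
by apply: eq_bigr => i _; rewrite fps_Xmul mulrA.
Qed.

Lemma fps_pow_scaled_shift c h m n :
  fps_pow (fun k => c * fps_mul (@fps_X R) h k) m n
  = if (m <= n)%N then c ^+ m * fps_pow h m (n - m) else 0.
Proof.
elim: m n => [|m IHm] n; first by rewrite subn0 mul1r.
rewrite fps_powS fps_mul_scaled_shift.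
case: n => [|n] //; rewrite ltnS subSS {1}/fps_mul.
under eq_bigr do rewrite IHm.
have [le_mn|lt_nm] := leqP m n; last first.
  rewrite big1 ?mulr0 // => i _; rewrite ifF ?mulr0 //.
  by apply/negbTE; rewrite -ltnNge (leq_ltn_trans (leq_subr _ _) lt_nm).
pose F i := h i * (if (m <= n - i)%N then c ^+ m * fps_pow h m (n - i - m) else 0).
rewrite (@sum_ord_trunc _ F (n - m).+1) ?ltnS ?leq_subr //; last first.
  move=> i /andP[lt_i lt_in]; rewrite /F ifF ?mulr0 //.
  by apply/negbTE; rewrite -ltnNge; lia.
rewrite exprS -mulrA fps_powS; congr (_ * _).
rewrite /fps_mul mulr_sumr; apply: eq_bigr => -[i /= lt_i] _.
rewrite /F ifT; last by lia.
by rewrite subnAC mulrCA.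
Qed.
End FormalPowerSeries.

Section Whipple.
Variable R : numFieldType.
Variables (a b c d : R) (k : nat).
Hypotheses (hb : forall m : nat, b != - m%:R) (hc : forall m : nat, c != - m%:R)
  (hd : forall m : nat, d != - m%:R) (hab : forall m : nat, 1 + a - b != - m%:R)
  (hac : forall m : nat, 1 + a - c != - m%:R).

Let alpha := k%:R - 1 - a + b + c + d.
Let ratio n := poch b n * poch c n / (poch (1 + a - b) n * poch (1 + a - c) n).
Let Q2_term n j := hypcoef [:: - n%:R; n%:R + a; - k%:R; alpha] [:: b; c; d] j.
Let rhs_coef n m := hypcoef [:: - n%:R; n%:R + a] [:: 1 + a - b; 1 + a - c; d] m.
Let saal m j := poch alpha j * poch (- k%:R) j * poch (d + j%:R) (m - j)
  * poch (d - alpha - - k%:R) (m - j) * 'C(m, j)%:R.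

(* For fixed j the remaining sum over l is a balanced terminating 3F2. *)
Lemma whipple_inner_term j r l :
  rhs_coef (j + r) (j + l) * saal (j + l) j
  = rhs_coef (j + r) j * poch alpha j * poch (- k%:R) j
    * hypcoef [:: - r%:R; (j + r)%:R + a + j%:R; 1 + a - b - c]
              [:: 1 + a - b + j%:R; 1 + a - c + j%:R] l.
Proof.
rewrite /rhs_coef /saal addKn !hypcoef_consl !hypcoef_consr !hypcoef_nil !pochD.
rewrite -(bin_fact (leq_addr l j)) addKn !natrM.
have binom_neq0 : 'C(j + l, j)%:R != 0 :> R by rewrite pnatr_eq0 -lt0n bin_gt0 leq_addr.
rewrite (_ : - (j + r)%:R + j%:R = - r%:R); last by rewrite natrD; ring.
rewrite (_ : d - alpha - - k%:R = 1 + a - b - c); last by rewrite /alpha; ring.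
by field; rewrite binom_neq0 !natr_fact_neq0 !(poch_shift_neq0, poch_neq0).
Qed.

Lemma whipple_inner j r :
  \sum_(l < r.+1) rhs_coef (j + r) (j + l) * saal (j + l) j
  = ratio (j + r) * Q2_term (j + r) j.
Proof.
under eq_bigr do rewrite whipple_inner_term.
rewrite -mulr_sumr.
set A' := (j + r)%:R + a + j%:R; set B' := 1 + a - b - c; set C' := 1 + a - b + j%:R.
have sign_neq0 : (-1) ^+ r != 0 :> R by rewrite signr_eq0.
have reflA : poch (C' - A') r = (-1) ^+ r * poch (b + j%:R) r.
  by apply: poch_reflect; rewrite /C' /A' natrD; ring.
have reflAB : poch (C' - A' - B') r = (-1) ^+ r * poch (1 + a - c + j%:R) r.
  by apply: poch_reflect; rewrite /C' /A' /B' natrD; ring.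
rewrite (_ : 1 + a - c + j%:R = 1 + A' + B' - C' - r%:R); last first.
  by rewrite /A' /B' /C' natrD; ring.
rewrite pfaff_saalschutz_balanced ?poch_shift_neq0 //; last first.
  by rewrite reflAB mulf_neq0 ?poch_shift_neq0.
rewrite reflA reflAB (_ : C' - B' = c + j%:R); last by rewrite /C' /B'; ring.
rewrite /rhs_coef /ratio /Q2_term /C' !hypcoef_consl !hypcoef_consr hypcoef_nil !pochD.
by field; rewrite sign_neq0 natr_fact_neq0 !(poch_shift_neq0, poch_neq0).
Qed.

Lemma Q2_whipple n :
  poch b n * poch c n / (poch (1 + a - b) n * poch (1 + a - c) n) * Q2 k n a b c d
  = \sum_(m < n.+1) hypcoef [:: - n%:R; n%:R + a; 1 - k%:R + a - b - c; k%:R + d]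
                            [:: 1 + a - b; 1 + a - c; d] m.
Proof.
have Q2E : Q2 k n a b c d = \sum_(j < k.+1) Q2_term n j.
  by apply: eq_bigr => j _; rewrite /Q2_term /hypcoef !big_cons !big_nil !mulr1 !mulrA.
have Q2_term_eq0 j : (n < j)%N || (k < j)%N -> Q2_term n j = 0.
  rewrite /Q2_term !hypcoef_consl => /orP[] /poch_Nnat_eq0 ->; ring.
pose F j := ratio n * Q2_term n j.
transitivity (\sum_(j < (n + k).+1) F j).
  rewrite Q2E mulr_sumr; symmetry; apply: (@sum_ord_trunc _ F).
    by rewrite ltnS leq_addl.
  by move=> j /andP[lt_kj _]; rewrite /F Q2_term_eq0 ?lt_kj ?orbT ?mulr0.
transitivity (\sum_(j < n.+1) F j).
  apply: (@sum_ord_trunc _ F); first by rewrite ltnS leq_addr.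
  by move=> j /andP[lt_nj _]; rewrite /F Q2_term_eq0 ?lt_nj ?mulr0.
transitivity (\sum_(m < n.+1) \sum_(j < m.+1) rhs_coef n m * saal m j).
  rewrite (sum_triangle_exchange (fun m j => rhs_coef n m * saal m j)).
  apply: eq_bigr => -[j /= lt_jn] _.
  by have := whipple_inner j (n - j); rewrite subnKC ?(ltnSE lt_jn) // => ->.
apply: eq_bigr => m _.
rewrite -mulr_sumr pfaff_saalschutz /rhs_coef !hypcoef_consl !hypcoef_consr.
rewrite (_ : d - alpha = 1 - k%:R + a - b - c); last by rewrite /alpha; ring.
by rewrite opprK (addrC d); ring.
Qed.
End Whipple.

Section Transformation.
Variable R : numFieldType.
Variables (a b c d : R) (k : nat).
Hypotheses (hb : forall m : nat, b != - m%:R) (hc : forall m : nat, c != - m%:R)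
  (hd : forall m : nat, d != - m%:R) (hab : forall m : nat, 1 + a - b != - m%:R)
  (hac : forall m : nat, 1 + a - c != - m%:R).

Let T m := hypcoef [:: 1 - k%:R + a - b - c; k%:R + d] [:: 1 + a - b; 1 + a - c; d] m.
Let K m := (-1) ^+ m * poch a (2 * m) * T m.

Lemma transformation_lhs N :
  fps_comp
    (hypcoef [:: a / 2%:R; 2%:R^-1 + a / 2%:R; 1 - k%:R + a - b - c; k%:R + d]
             [:: 1 + a - b; 1 + a - c; d])
    (fun n => - 4%:R * fps_mul (@fps_X R) (binom_series (- 2%:R)) n) N
  = \sum_(m < N.+1) K m * binom_series (- (2 * m)%:R) (N - m).
Proof.
apply: eq_bigr => -[m /= lt_mN] _.
rewrite fps_pow_scaled_shift (ltnSE lt_mN) binom_series_pow natrM mulNr.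
by rewrite /K /T -poch_duplication !hypcoef_consl (exprNn (4%:R : R)); ring.
Qed.

Lemma transformation_rhs_term m l :
  poch a (m + l) / (m + l)`!%:R * (poch (- (m + l)%:R) m * poch ((m + l)%:R + a) m)
  = (-1) ^+ m * poch a (2 * m) * binom_series (- (a + (2 * m)%:R)) l.
Proof.
have pochE : poch a (m + l) * poch ((m + l)%:R + a) m
    = poch a (2 * m) * poch (a + (2 * m)%:R) l.
  by rewrite addrC -!pochD; congr poch; lia.
transitivity (poch a (m + l) * poch ((m + l)%:R + a) m
               * (poch (- (m + l)%:R) m / (m + l)`!%:R)); first by ring.
by rewrite pochE poch_Nnat_fact /binom_series opprK; ring.
Qed.

Lemma transformation_rhs N :
  fps_mul (binom_series a)
    (fun n => hypcoef [:: a; b; c] [:: 1 + a - b; 1 + a - c] n * Q2 k n a b c d) N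
  = \sum_(m < N.+1) K m * binom_series (- (2 * m)%:R) (N - m).
Proof.
pose F n m := binom_series a (N - n)
  * (poch a n / n`!%:R * (poch (- n%:R) m * poch (n%:R + a) m)) * T m.
transitivity (\sum_(n < N.+1) \sum_(m < n.+1) F n m).
  rewrite fps_mulC; apply: eq_bigr => n _.
  have -> : hypcoef [:: a; b; c] [:: 1 + a - b; 1 + a - c] n = poch a n / n`!%:R
      * (poch b n * poch c n / (poch (1 + a - b) n * poch (1 + a - c) n)).
    by rewrite !hypcoef_consl !hypcoef_consr hypcoef_nil invfM; ring.
  rewrite -[_ * _ * Q2 _ _ _ _ _ _]mulrA Q2_whipple // !mulr_sumr mulr_suml.
  apply: eq_bigr => m _.
  by rewrite /F /T !hypcoef_consl; ring.
rewrite (sum_triangle_exchange F); apply: eq_bigr => m _.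
transitivity (\sum_(l < (N - m).+1)
    K m * (binom_series (- (a + (2 * m)%:R)) l * binom_series a (N - m - l))).
  by apply: eq_bigr => l _; rewrite /F transformation_rhs_term /K subnDA; ring.
rewrite -mulr_sumr; congr (_ * _).
by rewrite -[LHS]/(fps_mul _ _ _) binom_series_mul; congr binom_series; ring.
Qed.
End Transformation.

Theorem theorem4 (R : numClosedFieldType) (k : nat) (a b c d : R)
  (hb : forall m : nat, b != - m%:R)
  (hc : forall m : nat, c != - m%:R)
  (hd : forall m : nat, d != - m%:R)
  (hab : forall m : nat, 1 + a - b != - m%:R)
  (hac : forall m : nat, 1 + a - c != - m%:R) :
  forall N : nat,
    fps_comp
      (hypcoef [:: a / 2%:R; 2%:R^-1 + a / 2%:R; 1 - k%:R + a - b - c; k%:R + d]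
               [:: 1 + a - b; 1 + a - c; d])
      (fun n => - 4%:R * fps_mul (@fps_X R) (binom_series (- 2%:R)) n) N
    = fps_mul (binom_series a)
        (fun n => hypcoef [:: a; b; c] [:: 1 + a - b; 1 + a - c] n * Q2 k n a b c d) N.
Proof. by move=> N; rewrite transformation_lhs transformation_rhs. Qed.
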